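(* Let $K$ be a field and $K[x,x^{-1}]$ the Laurent polynomial algebra, with involution ${}^\natural$ on $\mathbb{M}_2(K[x,x^{-1}])$ given by $\big((f_{ij}(x))\big)^\natural=(f_{ji}(x^{-1}))$. Let $\mathbf{K}_{\mathbb{M}_2(K[x,x^{-1}])}=\{X: X^\natural=-X\}$. Then: (1) If $\mathrm{char}(K)=2$, then $\mathbf{K}_{\mathbb{M}_2(K[x,x^{-1}])}$ is Lie solvable of index $3$ but not Lie nilpotent. (2) If $\mathrm{char}(K)\neq 2$, then $\mathbf{K}_{\mathbb{M}_2(K[x,x^{-1}])}$ is not Lie solvable.
   Context: Lie bracket $[a,b]=ab-ba$; $[S,T]=\mathrm{span}_K\{ab-ba:a\in S,b\in T\}$. For a Lie subalgebra $\mathcal{L}$: $\mathcal{L}^{(0)}=\mathcal{L}$, $\mathcal{L}^{(n)}=[\mathcal{L}^{(n-1)},\mathcal{L}^{(n-1)}]$; $\mathcal{L}^0=\mathcal{L}$, $\mathcal{L}^n=[\mathcal{L}^{n-1},\mathcal{L}]$. Lie solvable (resp. nilpotent) means $\mathcal{L}^{(n)}=0$ (resp. $\mathcal{L}^n=0$) for some $n$; the index of solvability is the smallest such $n$. *)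

From HB Require Import structures.
From mathcomp Require Import all_boot all_order all_algebra.
Set Implicit Arguments. Unset Strict Implicit. Unset Printing Implicit Defensive.
Import GRing.Theory.
Local Open Scope ring_scope.

(* The Laurent polynomial algebra K[x,x^{-1}] is realised inside the field of
   rational functions K(x) = {fraction {poly K}} as the subring of the
   elements p(x) / x^n, with p a polynomial and n a natural number. *)

Section Laurent.
Variable K : fieldType.

Definition ratfun := {fraction {poly K}}.

Definition xF : ratfun := tofrac 'X.

Definition cstF (c : K) : ratfun := tofrac (c%:P).

Definition is_laurent (f : ratfun) : Prop :=
  exists (p : {poly K}) (n : nat), f = tofrac p / xF ^+ n.

Definition poly_at_inv (p : {poly K}) : ratfun :=
  (map_poly cstF p).[xF^-1].

Definition sub_inv (f : ratfun) : ratfun :=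
  let r := repr f in poly_at_inv (frac r).1 / poly_at_inv (frac r).2.

Definition mat := 'M[ratfun]_2.

Definition laurent_mx (M : mat) : Prop := forall i j, is_laurent (M i j).

Definition natural (M : mat) : mat := \matrix_(i, j) sub_inv (M j i).

Definition skewK (M : mat) : Prop := laurent_mx M /\ natural M = - M.

Definition lie_bracket_span (S T : mat -> Prop) (M : mat) : Prop :=
  exists s : seq (K * mat * mat),
    (forall t, t \in s -> S t.1.2 /\ T t.2) /\
    M = \sum_(t <- s) (cstF t.1.1 *: (t.1.2 * t.2 - t.2 * t.1.2)).

Fixpoint derived (L : mat -> Prop) (n : nat) : mat -> Prop :=
  match n with
  | 0 => L
  | n'.+1 => lie_bracket_span (derived L n') (derived L n')
  end.

Fixpoint lower_central (L : mat -> Prop) (n : nat) : mat -> Prop :=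
  match n with
  | 0 => L
  | n'.+1 => lie_bracket_span (lower_central L n') L
  end.

Definition is_zero_set (S : mat -> Prop) : Prop := forall M, S M -> M = 0.

Definition lie_solvable (L : mat -> Prop) : Prop :=
  exists n, is_zero_set (derived L n).

Definition lie_nilpotent (L : mat -> Prop) : Prop :=
  exists n, is_zero_set (lower_central L n).

Definition lie_solvable_index (L : mat -> Prop) (m : nat) : Prop :=
  is_zero_set (derived L m) /\ forall n, (n < m)%N -> ~ is_zero_set (derived L n).

End Laurent.

(* The map f(x) |-> f(x^-1) is a field automorphism of K(x): on a quotient
   p/q it is p(x^-1)/q(x^-1), which is well defined because x^-1, like x, is
   transcendental over K.

   In characteristic 2, commutators have trace 0, the commutator of two
   traceless 2x2 matrices is scalar, and scalars are central, so the third
   derived term of any set of matrices vanishes; explicit skew matrices built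
   from 1, x, x^-1 show that the earlier terms do not, and the skew matrix
   [[0,1],[1,0]] is its own commutator with diag(1,0), so it survives in the
   whole lower central series.

   In characteristic not 2, put s = x - x^-1, which the involution maps to -s.
   The matrices J_n = s^n [[0,1],[-1,0]] (n even), P_n = s^n diag(1,-1) and
   Q_n = s^n [[0,1],[1,0]] (n odd) are skew and satisfy [J_m,Q_n] = 2 P_(m+n),
   [P_m,Q_n] = 2 J_(m+n), [P_m,J_n] = 2 Q_(m+n); as 2 is invertible, every
   derived term contains all of them with large enough exponent. *)

From HB Require Import structures.
From mathcomp Require Import all_boot all_order all_algebra generic_quotient fraction.
From mathcomp Require Import zify ring.
Set Implicit Arguments. Unset Strict Implicit. Unset Printing Implicit Defensive.
Import GRing.Theory.
Local Open Scope ring_scope.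

Section RationalFunctions.
Variable K : fieldType.
Local Notation F := (ratfun K).
Local Notation x := (xF K).

HB.instance Definition _ := GRing.RMorphism.copy (@cstF K) (@tofrac _ \o @polyC K).
HB.instance Definition _ :=
  GRing.RMorphism.copy (@poly_at_inv K) (horner_eval x^-1 \o map_poly (@cstF K)).

Lemma xF_neq0 : x != 0.
Proof. by rewrite tofrac_eq0 polyX_eq0. Qed.

Lemma horner_cstF_xF (p : {poly K}) : (map_poly (@cstF K) p).[x] = tofrac p.
Proof.
have -> : map_poly (@cstF K) p = map_poly (@tofrac _) p^:P by rewrite -map_poly_comp.
by rewrite horner_map /= -/(comp_poly 'X p) comp_polyXr.
Qed.

Lemma poly_at_inv_eq0 (q : {poly K}) : (poly_at_inv q == 0) = (q == 0).
Proof.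
apply/idP/idP => [/eqP q0 | /eqP ->]; last by rewrite rmorph0.
apply/negPn/negP => nz_q.
have /algebraic_inv : algebraicOver (@cstF K) x^-1 by exists q; last exact/rootP.
rewrite invrK => -[p nz_p /rootP].
by rewrite horner_cstF_xF => /eqP; rewrite tofrac_eq0 (negbTE nz_p).
Qed.

Lemma tofrac_numden_repr (f : F) :
  tofrac (frac (repr f)).1 / tofrac (frac (repr f)).2 = f.
Proof.
have d0 : tofrac (frac (repr f)).2 != 0 :> F by rewrite tofrac_eq0 denom_ratioP.
have : f * tofrac (frac (repr f)).2 = tofrac (frac (repr f)).1.
  rewrite -{1}[f]reprK; unlock FracField.tofrac.
  rewrite -[LHS]FracField.pi_mul; apply/eqmodP.
  rewrite /= FracField.equivfE /FracField.mulf /=.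
  rewrite !numden_Ratio ?mulf_neq0 ?denom_ratioP ?oner_neq0 //.
  by rewrite !mulr1 mulrC.
by move=> <-; rewrite mulfK.
Qed.

Lemma ratfunP (f : F) :
  exists2 pq : {poly K} * {poly K}, pq.2 != 0 & f = tofrac pq.1 / tofrac pq.2.
Proof. by exists (frac (repr f)); rewrite ?denom_ratioP ?tofrac_numden_repr. Qed.

Lemma sub_inv_frac (p q : {poly K}) : q != 0 ->
  sub_inv (tofrac p / tofrac q) = poly_at_inv p / poly_at_inv q.
Proof.
move=> nz_q; rewrite /sub_inv; set f := tofrac p / tofrac q.
have nz_d := denom_ratioP (repr f).
have /eqP := tofrac_numden_repr f; rewrite {2}/f.
rewrite eqr_div ?tofrac_eq0 // -!rmorphM tofrac_eq => /eqP cross.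
apply/eqP; rewrite eqr_div ?poly_at_inv_eq0 //.
by rewrite -!rmorphM /= cross.
Qed.

Lemma sub_invD : {morph @sub_inv K : f g / f + g}.
Proof.
move=> f g; have [[p q] /= nz_q ->] := ratfunP f; have [[p' q'] /= nz_q' ->] := ratfunP g.
rewrite addf_div ?tofrac_eq0 // -!rmorphM -rmorphD !sub_inv_frac ?mulf_neq0 //.
by rewrite rmorphD !rmorphM addf_div ?poly_at_inv_eq0.
Qed.

Lemma sub_invB : {morph @sub_inv K : f g / f - g}.
Proof. by move=> f g; rewrite -[in sub_inv f](subrK g f) (sub_invD (f - g)) addrK. Qed.

Lemma sub_invM : {morph @sub_inv K : f g / f * g}.
Proof.
move=> f g; have [[p q] /= nz_q ->] := ratfunP f; have [[p' q'] /= nz_q' ->] := ratfunP g.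
rewrite mulf_div -!rmorphM !sub_inv_frac ?mulf_neq0 //.
by rewrite !rmorphM mulf_div.
Qed.

Lemma sub_inv_tofrac (p : {poly K}) : sub_inv (tofrac p) = poly_at_inv p.
Proof. by rewrite -[tofrac p]divr1 -tofrac1 sub_inv_frac ?oner_neq0 // rmorph1 divr1. Qed.

Lemma sub_inv1 : sub_inv (1 : F) = 1.
Proof. by rewrite -tofrac1 sub_inv_tofrac rmorph1. Qed.

HB.instance Definition _ := GRing.isZmodMorphism.Build F F (@sub_inv K) sub_invB.
HB.instance Definition _ :=
  GRing.isMonoidMorphism.Build F F (@sub_inv K) (conj sub_inv1 sub_invM).

Lemma sub_invX : sub_inv x = x^-1.
Proof. by rewrite sub_inv_tofrac /poly_at_inv map_polyX hornerX. Qed.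

Lemma laurent_tofrac (p : {poly K}) : is_laurent (tofrac p : F).
Proof. by exists p, 0%N; rewrite expr0 divr1. Qed.

Lemma laurent0 : is_laurent (0 : F).
Proof. by rewrite -tofrac0; apply: laurent_tofrac. Qed.

Lemma laurent1 : is_laurent (1 : F).
Proof. by rewrite -tofrac1; apply: laurent_tofrac. Qed.

Lemma laurentX : is_laurent x.
Proof. exact: laurent_tofrac. Qed.

Lemma laurentV : is_laurent x^-1.
Proof. by exists 1, 1%N; rewrite tofrac1 expr1 div1r. Qed.

Lemma laurentN (f : F) : is_laurent f -> is_laurent (- f).
Proof. by move=> [p [n ->]]; exists (- p), n; rewrite tofracN mulNr. Qed.

Lemma laurentM (f g : F) : is_laurent f -> is_laurent g -> is_laurent (f * g).
Proof.
by move=> [p [n ->]] [q [m ->]]; exists (p * q), (n + m)%N; rewrite tofracM exprD mulf_div.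
Qed.

Lemma laurentXn (f : F) n : is_laurent f -> is_laurent (f ^+ n).
Proof.
move=> lf; elim: n => [|n IHn]; first by rewrite expr0; apply: laurent1.
by rewrite exprS; apply: laurentM.
Qed.

Definition x_sub_xV : F := x - x^-1.

Lemma x_sub_xVE : x_sub_xV = tofrac ('X^2 - 1) / x.
Proof. by rewrite tofracB tofracXn tofrac1 mulrBl mul1r expr2 mulfK ?xF_neq0. Qed.

Lemma laurent_x_sub_xV : is_laurent x_sub_xV.
Proof. by rewrite x_sub_xVE; exists ('X^2 - 1), 1%N; rewrite expr1. Qed.

Lemma x_sub_xV_neq0 : x_sub_xV != 0.
Proof.
rewrite x_sub_xVE mulf_eq0 invr_eq0 (negbTE xF_neq0) orbF tofrac_eq0.
by rewrite -size_poly_eq0 -polyC1 size_XnsubC.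
Qed.

Lemma sub_inv_x_sub_xV : sub_inv x_sub_xV = - x_sub_xV.
Proof. by rewrite /x_sub_xV rmorphB fmorphV /= sub_invX invrK opprB. Qed.

End RationalFunctions.

Section TwoByTwo.
Variable R : comNzRingType.
Implicit Types (a b c d k : R) (A B : 'M[R]_2).

Lemma ord2P (i : 'I_2) : i = 0 \/ i = 1.
Proof. by case: i => [[|[|//]] i_lt2]; [left | right]; apply: val_inj. Qed.

Lemma mx2_ext A B :
  A 0 0 = B 0 0 -> A 0 1 = B 0 1 -> A 1 0 = B 1 0 -> A 1 1 = B 1 1 -> A = B.
Proof.
move=> e00 e01 e10 e11; apply/matrixP => i j.
by case: (ord2P i) => ->; case: (ord2P j) => ->.
Qed.

Definition mk2 a b c d : 'M[R]_2 :=
  \matrix_(i, j) if i == 0 then if j == 0 then a else b else if j == 0 then c else d.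

Lemma mk2E A : A = mk2 (A 0 0) (A 0 1) (A 1 0) (A 1 1).
Proof. by apply: mx2_ext; rewrite mxE. Qed.

Lemma mk2_00 a b c d : mk2 a b c d 0 0 = a. Proof. by rewrite mxE. Qed.
Lemma mk2_01 a b c d : mk2 a b c d 0 1 = b. Proof. by rewrite mxE. Qed.

Lemma mk2_add a b c d a' b' c' d' :
  mk2 a b c d + mk2 a' b' c' d' = mk2 (a + a') (b + b') (c + c') (d + d').
Proof. by apply: mx2_ext; rewrite !mxE. Qed.

Lemma mk2_opp a b c d : - mk2 a b c d = mk2 (- a) (- b) (- c) (- d).
Proof. by apply: mx2_ext; rewrite !mxE. Qed.

Lemma mk2_scale k a b c d : k *: mk2 a b c d = mk2 (k * a) (k * b) (k * c) (k * d).
Proof. by apply: mx2_ext; rewrite !mxE. Qed.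

Lemma mk2_mul a b c d a' b' c' d' :
  mk2 a b c d * mk2 a' b' c' d' =
  mk2 (a * a' + b * c') (a * b' + b * d') (c * a' + d * c') (c * b' + d * d').
Proof.
by apply: mx2_ext; rewrite -mulmxE !mxE !big_ord_recl big_ord0 !mxE /= addr0.
Qed.

Lemma mk2_commutator a b c d a' b' c' d' :
  mk2 a b c d * mk2 a' b' c' d' - mk2 a' b' c' d' * mk2 a b c d =
  mk2 (b * c' - b' * c) (a * b' + b * d' - (a' * b + b' * d))
      (c * a' + d * c' - (c' * a + d' * c)) (c * b' - c' * b).
Proof. by rewrite !mk2_mul mk2_opp mk2_add; congr mk2; ring. Qed.

Lemma mk2_neq0_01 a b c d : b != 0 -> mk2 a b c d != 0.
Proof. by apply: contra_neq => eq0; rewrite -(mk2_01 a b c d) eq0 mxE. Qed.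

Lemma mk2_neq0_00 a b c d : a != 0 -> mk2 a b c d != 0.
Proof. by apply: contra_neq => eq0; rewrite -(mk2_00 a b c d) eq0 mxE. Qed.

Lemma mxtrace_mk2 a b c d : \tr (mk2 a b c d) = a + d.
Proof. by rewrite /mxtrace !big_ord_recl big_ord0 !mxE addr0. Qed.

Lemma scalar_mk2 a : a%:M = mk2 a 0 0 a :> 'M[R]_2.
Proof. by apply: mx2_ext; rewrite !mxE. Qed.

Lemma mxtrace_commutator n (A B : 'M[R]_n.+1) : \tr (A * B - B * A) = 0.
Proof. by rewrite raddfB /= mxtrace_mulC subrr. Qed.

Lemma commutator_scalar_mx n a (B : 'M[R]_n.+1) : a%:M * B - B * a%:M = 0.
Proof. by rewrite -!mulmxE scalar_mxC subrr. Qed.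

Lemma mxtrace_eq0_char2 A : 2%N \in [pchar R] -> \tr A = 0 -> A 0 0 = A 1 1.
Proof.
move=> ch2; rewrite /mxtrace !big_ord_recl big_ord0 addr0 => /eqP.
rewrite addr_eq0 => /eqP ->; rewrite (oppr_pchar2 ch2).
by congr (A _ _); apply: val_inj.
Qed.

Lemma commutator_tr0_char2 A B : 2%N \in [pchar R] ->
  \tr A = 0 -> \tr B = 0 -> A * B - B * A = (A 0 1 * B 1 0 - B 0 1 * A 1 0)%:M.
Proof.
move=> ch2 /(mxtrace_eq0_char2 ch2) dA /(mxtrace_eq0_char2 ch2) dB.
rewrite [A]mk2E [B]mk2E -dA -dB mk2_commutator scalar_mk2 !mxE /=.
by congr mk2; [ring | ring | rewrite -[RHS](oppr_pchar2 ch2); ring].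
Qed.

End TwoByTwo.

Section LieBrackets.
Variable K : fieldType.
Local Notation F := (ratfun K).
Local Notation x := (xF K).
Implicit Types (S T P : mat K -> Prop) (A B M : mat K) (a b c d : F).

Lemma lie_bracket_span_ind S T P :
  P 0 -> (forall A B, P A -> P B -> P (A + B)) ->
  (forall k A, P A -> P (cstF k *: A)) ->
  (forall A B, S A -> T B -> P (A * B - B * A)) ->
  forall M, lie_bracket_span S T M -> P M.
Proof.
move=> P0 PD PZ Pbr M [s [sST ->]].
elim: s sST => [|t s IHs] sST; first by rewrite big_nil.
rewrite big_cons; apply: PD; last by apply: IHs => u us; apply: sST; rewrite inE us orbT.
by have [St Tt] := sST t (mem_head _ _); apply/PZ/Pbr.
Qed.

Lemma lie_bracket_span_scale S T k A B :
  S A -> T B -> lie_bracket_span S T (cstF k *: (A * B - B * A)).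
Proof.
move=> SA TB; exists [:: (k, A, B)]; split; last by rewrite big_seq1.
by move=> t; rewrite inE => /eqP ->.
Qed.

Lemma lie_bracket_span_commutator S T A B :
  S A -> T B -> lie_bracket_span S T (A * B - B * A).
Proof.
by move=> SA TB; rewrite -[_ - _]scale1r -(rmorph1 (@cstF K)); apply: lie_bracket_span_scale.
Qed.

Lemma derived3_char2 (L : mat K -> Prop) :
  2%N \in [pchar F] -> is_zero_set (derived L 3).
Proof.
move=> ch2.
have tr0 M : derived L 1 M -> \tr M = 0.
  elim/lie_bracket_span_ind => [|A B trA trB|k A trA|A B _ _].
  - exact: mxtrace0.
  - by rewrite mxtraceD trA trB addr0.
  - by rewrite mxtraceZ trA mulr0.
  - exact: mxtrace_commutator.
have scalar M : derived L 2 M -> exists c, M = c%:M.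
  elim/lie_bracket_span_ind => [|A B [a ->] [b ->]|k A [a ->]|A B /tr0 trA /tr0 trB].
  - by exists 0; rewrite raddf0.
  - by exists (a + b); rewrite raddfD.
  - by exists (cstF k * a); rewrite scale_scalar_mx.
  - by eexists; apply: commutator_tr0_char2.
move=> M; elim/lie_bracket_span_ind => [//|A B -> ->|k A ->|A B /scalar [a ->] _].
- exact: addr0.
- exact: scaler0.
- exact: commutator_scalar_mx.
Qed.

Lemma natural_mk2 a b c d :
  natural (mk2 a b c d) = mk2 (sub_inv a) (sub_inv c) (sub_inv b) (sub_inv d).
Proof. by apply: mx2_ext; rewrite !mxE. Qed.

Lemma laurent_mk2 a b c d :
  is_laurent a -> is_laurent b -> is_laurent c -> is_laurent d -> laurent_mx (mk2 a b c d).
Proof.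
by move=> la lb lc ld i j; case: (ord2P i) => ->; case: (ord2P j) => ->; rewrite mxE.
Qed.

Section Char2.
Hypothesis ch2 : 2%N \in [pchar F].

Lemma skewK_char2 M : laurent_mx M -> natural M = M -> skewK M.
Proof.
move=> lM nM; split; rewrite // nM.
by apply/matrixP => i j; rewrite mxE (oppr_pchar2 ch2).
Qed.

Definition e00 : mat K := mk2 1 0 0 0.
Definition swap1 : mat K := mk2 0 1 1 0.
Definition swapx : mat K := mk2 0 x x^-1 0.

Lemma skewK_e00 : skewK e00.
Proof.
apply: skewK_char2; first by apply: laurent_mk2; [exact: laurent1 | exact: laurent0 ..].
by rewrite natural_mk2 rmorph0 rmorph1.
Qed.

Lemma skewK_swap1 : skewK swap1.
Proof.
apply: skewK_char2.
  by apply: laurent_mk2; [exact: laurent0 | exact: laurent1 | exact: laurent1 | exact: laurent0].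
by rewrite natural_mk2 rmorph0 rmorph1.
Qed.

Lemma skewK_swapx : skewK swapx.
Proof.
apply: skewK_char2.
  by apply: laurent_mk2; [exact: laurent0 | exact: laurentX | exact: laurentV | exact: laurent0].
by rewrite natural_mk2 rmorph0 fmorphV /= sub_invX invrK.
Qed.

Lemma skewK_derived_neq0_char2 n : (n < 3)%N -> ~ is_zero_set (derived (@skewK K) n).
Proof.
have c1 : e00 * swap1 - swap1 * e00 = mk2 0 1 (-1) 0.
  by rewrite mk2_commutator; congr mk2; ring.
have c2 : e00 * swapx - swapx * e00 = mk2 0 x (- x^-1) 0.
  by rewrite mk2_commutator; congr mk2; ring.
have c3 : mk2 0 1 (-1) 0 * mk2 0 x (- x^-1) 0 - mk2 0 x (- x^-1) 0 * mk2 0 1 (-1) 0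
          = mk2 (x_sub_xV K) 0 0 (- x_sub_xV K).
  by rewrite mk2_commutator /x_sub_xV; congr mk2; ring.
have d1 : derived (@skewK K) 1 (mk2 0 1 (-1) 0).
  by rewrite -c1; apply: lie_bracket_span_commutator; [exact: skewK_e00 | exact: skewK_swap1].
have d1' : derived (@skewK K) 1 (mk2 0 x (- x^-1) 0).
  by rewrite -c2; apply: lie_bracket_span_commutator; [exact: skewK_e00 | exact: skewK_swapx].
case: n => [_|[_|[_|//]]] zero.
- by apply/eqP: (zero _ skewK_e00); apply: mk2_neq0_00; rewrite oner_neq0.
- by apply/eqP: (zero _ d1); apply: mk2_neq0_01; rewrite oner_neq0.
have := zero _ (lie_bracket_span_commutator d1 d1'); rewrite c3.
by apply/eqP; apply: mk2_neq0_00; apply: x_sub_xV_neq0.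
Qed.

Lemma lower_central_swap1 n : lower_central (@skewK K) n swap1.
Proof.
elim: n => [|n IHn]; first exact: skewK_swap1.
have <- : swap1 * e00 - e00 * swap1 = swap1.
  rewrite mk2_commutator; congr mk2; try ring.
  by rewrite -[RHS](oppr_pchar2 ch2); ring.
by apply: lie_bracket_span_commutator => //; apply: skewK_e00.
Qed.

Lemma skewK_not_nilpotent_char2 : ~ lie_nilpotent (@skewK K).
Proof.
case=> n zero; apply/eqP: (zero _ (lower_central_swap1 n)).
by apply: mk2_neq0_01; rewrite oner_neq0.
Qed.

End Char2.

Section CharNot2.
Hypothesis two_neq0 : 2%:R != 0 :> K.
Local Notation s := (x_sub_xV K).

Definition Jmx n : mat K := mk2 0 (s ^+ n) (- s ^+ n) 0.
Definition Pmx n : mat K := mk2 (s ^+ n) 0 0 (- s ^+ n).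
Definition Qmx n : mat K := mk2 0 (s ^+ n) (s ^+ n) 0.

Lemma Jmx_Qmx_commutator m n : Jmx m * Qmx n - Qmx n * Jmx m = 2%:R *: Pmx (m + n).
Proof. by rewrite mk2_commutator mk2_scale exprD; congr mk2; ring. Qed.

Lemma Pmx_Qmx_commutator m n : Pmx m * Qmx n - Qmx n * Pmx m = 2%:R *: Jmx (m + n).
Proof. by rewrite mk2_commutator mk2_scale exprD; congr mk2; ring. Qed.

Lemma Pmx_Jmx_commutator m n : Pmx m * Jmx n - Jmx n * Pmx m = 2%:R *: Qmx (m + n).
Proof. by rewrite mk2_commutator mk2_scale exprD; congr mk2; ring. Qed.

Lemma lie_bracket_span_half S T A B C :
  S A -> T B -> A * B - B * A = 2%:R *: C -> lie_bracket_span S T C.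
Proof.
move=> SA TB AB; have -> : C = cstF 2%:R^-1 *: (A * B - B * A).
  rewrite AB scalerA fmorphV rmorph_nat mulVf ?scale1r //.
  by rewrite -(rmorph_nat (@cstF K)) fmorph_eq0.
exact: lie_bracket_span_scale.
Qed.

Lemma sub_inv_x_sub_xV_expr n : sub_inv (s ^+ n) = (-1) ^+ n * s ^+ n.
Proof. by rewrite -exprNn -sub_inv_x_sub_xV rmorphXn. Qed.

Lemma laurent_x_sub_xV_expr n : is_laurent (s ^+ n).
Proof. exact/laurentXn/laurent_x_sub_xV. Qed.

Lemma skewK_Jmx k : skewK (Jmx k.*2).
Proof.
split.
  by apply: laurent_mk2; do ?apply: laurentN; do ?apply: laurent0; apply: laurent_x_sub_xV_expr.
rewrite natural_mk2 mk2_opp rmorph0 rmorphN /= !sub_inv_x_sub_xV_expr.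
by rewrite -signr_odd odd_double expr0 mul1r oppr0 opprK.
Qed.

Lemma skewK_Pmx k : skewK (Pmx k.*2.+1).
Proof.
split.
  by apply: laurent_mk2; do ?apply: laurentN; do ?apply: laurent0; apply: laurent_x_sub_xV_expr.
rewrite natural_mk2 mk2_opp rmorph0 rmorphN /= !sub_inv_x_sub_xV_expr.
by rewrite -signr_odd /= odd_double expr1 mulN1r oppr0.
Qed.

Lemma skewK_Qmx k : skewK (Qmx k.*2.+1).
Proof.
split.
  by apply: laurent_mk2; do ?apply: laurent0; apply: laurent_x_sub_xV_expr.
rewrite natural_mk2 mk2_opp rmorph0 /= !sub_inv_x_sub_xV_expr.
by rewrite -signr_odd /= odd_double expr1 mulN1r oppr0.
Qed.

Lemma derived_skewK_JPQ n : exists m, forall k, (m <= k)%N ->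
  [/\ derived (@skewK K) n (Jmx k.*2), derived (@skewK K) n (Pmx k.*2.+1)
    & derived (@skewK K) n (Qmx k.*2.+1)].
Proof.
elim: n => [|n [m IHn]].
  by exists 0%N => k _; split; [apply: skewK_Jmx | apply: skewK_Pmx | apply: skewK_Qmx].
(* exponents add under brackets, so the threshold goes from m to 2m + 1 *)
exists m.*2.+1 => k le_k.
have [Jm Pm _] := IHn m (leqnn m).
have [_ _ Q1] := IHn (k - m.+1)%N ltac:(lia).
have [_ P2 Q2] := IHn (k - m)%N ltac:(lia).
split.
- by apply: (lie_bracket_span_half Pm Q1); rewrite Pmx_Qmx_commutator; congr (_ *: Jmx _); lia.
- by apply: (lie_bracket_span_half Jm Q2); rewrite Jmx_Qmx_commutator; congr (_ *: Pmx _); lia.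
- by apply: (lie_bracket_span_half P2 Jm); rewrite Pmx_Jmx_commutator; congr (_ *: Qmx _); lia.
Qed.

Lemma skewK_not_solvable : ~ lie_solvable (@skewK K).
Proof.
case=> n zero; have [m /(_ m (leqnn m)) [Jm _ _]] := derived_skewK_JPQ n.
by apply/eqP: (zero _ Jm); apply/mk2_neq0_01/expf_neq0/x_sub_xV_neq0.
Qed.

End CharNot2.
End LieBrackets.

Theorem corollary3p3 (K : fieldType) :
  ((2%N \in [pchar K]) ->
     lie_solvable_index (@skewK K) 3 /\ ~ lie_nilpotent (@skewK K)) /\
  (~ (2%N \in [pchar K]) -> ~ lie_solvable (@skewK K)).
Proof.
split=> [ch2K | not_ch2K].
  have ch2 : 2%N \in [pchar ratfun K] := rmorph_pchar (@cstF K) ch2K.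
  split; last exact: skewK_not_nilpotent_char2.
  by split; [apply: derived3_char2 | apply: skewK_derived_neq0_char2].
apply: skewK_not_solvable; apply/eqP => two0; apply: not_ch2K.
by rewrite inE /= two0 eqxx.
Qed.
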